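(* In the setting below, the vector $1\otimes e^{\lambda_1}\in V^{\Lambda_1}$ is a highest weight vector of type $Vir(\tfrac45,\tfrac1{15})\otimes W^{\Omega_4}$, i.e. it satisfies (HW1)–(HW5) with $h=1/15$ and $\omega_j=\omega_4$.
   Context: Setting. $Q$ is the $E_6$ root lattice with simple roots $\alpha_1,\dots,\alpha_6$ (Dynkin chain $\alpha_1-\alpha_3-\alpha_4-\alpha_5-\alpha_6$, $\alpha_2$ attached to $\alpha_4$), form from the Cartan matrix, fundamental weights $\lambda_i$, $P=\bigoplus\mathbb Z\lambda_i$, $\mathfrak h=\mathbb C\otimes P$. $\varepsilon$ bimultiplicative on $P$ with $[\varepsilon(\lambda_i,\lambda_j)]$ rows $(1,1,1,1,1,1)$, $(-1,1,1,1,1,-1)$, $(-1,1,1,1,1,1)$, $(1,-1,1,1,1,1)$, $(1,1,1,1,1,-1)$, $(1,1,1,1,1,1)$. $V_P=S(\hat{\mathfrak h}^-)\otimes\mathbb C[P]$ with Heisenberg operators $h(n)$ ($[h(m),h'(n)]=m\langle h,h'\rangle\delta_{m+n,0}$, $h(n)1=0$ for $n>0$, $h(0)(u\otimes e^\beta)=\langle h,\beta\rangle u\otimes e^\beta$). For $\alpha\in Q$, acting on $V_P$: $Y(1\otimes e^\alpha,z)=\exp(\sum_{k\ge1}\frac{\alpha(-k)}kz^k)\exp(-\sum_{k\ge1}\frac{\alpha(k)}kz^{-k})e_\alpha z^{\alpha(0)}=\sum_n\{1\otimes e^\alpha\}_nz^{-n-1}$, $e_\alpha(u\otimes e^\beta)=\varepsilon(\alpha,\beta)u\otimes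 e^{\alpha+\beta}$, $z^{\alpha(0)}(u\otimes e^\beta)=z^{\langle\alpha,\beta\rangle}u\otimes e^\beta$; $Y(h_1(-1)\cdots h_k(-1)\otimes e^\alpha,z)=\,:h_1(z)\cdots h_k(z)Y(1\otimes e^\alpha,z):$, $h(z)=\sum_nh(n)z^{-n-1}$. $V^{\Lambda_1}$ is the subspace spanned by $S(\hat{\mathfrak h}^-)\otimes e^\nu$, $\nu\in\lambda_1+Q$. $\tau$: $\alpha_1\leftrightarrow\alpha_6$, $\alpha_3\leftrightarrow\alpha_5$ (so $\lambda_1\leftrightarrow\lambda_6$, $\lambda_3\leftrightarrow\lambda_5$); $\mathrm{Proj}(\nu)=(\nu+\tau\nu)/2$. $\theta=\alpha_1+2\alpha_2+2\alpha_3+3\alpha_4+2\alpha_5+\alpha_6$. Raising operators of $\tilde{\mathfrak a}$ ($F_4^{(1)}$): $\{\beta_1\}_0=\{1\otimes e^{\alpha_2}\}_0$, $\{\beta_2\}_0=\{1\otimes e^{\alpha_4}\}_0$, $\{\beta_3\}_0=\{1\otimes e^{\alpha_3}\}_0+\{1\otimes e^{\alpha_5}\}_0$, $\{\beta_4\}_0=\{1\otimes e^{\alpha_1}\}_0+\{1\otimes e^{\alpha_6}\}_0$, $\{1\otimes e^{-\theta}\}_1$. Coset conformal vector $\omega=\frac1{10}[(-\lambda_1+\lambda_6)(-1)^2+(\lambda_3-\lambda_5)(-1)^2+(\lambda_1-\lambda_3+\lambda_5-\lambda_6)(-1)^2]\otimes e^0+\frac15(-1\otimes e^{\pm\gamma_1}-1\otimes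 e^{\pm\gamma_2}+1\otimes e^{\pm\gamma_3})$, $\gamma_1=\alpha_1-\alpha_6$, $\gamma_2=\alpha_3-\alpha_5$, $\gamma_3=\gamma_1+\gamma_2$, $1\otimes e^{\pm\gamma}:=1\otimes e^\gamma+1\otimes e^{-\gamma}$; $L(n)=\{\omega\}_{n+1}$ on $V_P$ (Virasoro, $c=4/5$, commuting with $\tilde{\mathfrak a}$). $\omega_4=\frac{\lambda_1+\lambda_6}2$, $\Omega_4$ the level one $F_4^{(1)}$ weight with finite part $\omega_4$, $W^{\Omega_4}$ its irreducible module. A nonzero $v$ is a highest weight vector of type $Vir(\frac45,h)\otimes W^{\Omega_j}$ if (HW1) $\{1\otimes e^{-\theta}\}_1v=0$; (HW2) $\{\beta_i\}_0v=0$, $i=1,\dots,4$; (HW3) $L(1)v=L(2)v=0$; (HW4) $L(0)v=hv$; (HW5) $v\in\bigoplus_kS(\hat{\mathfrak h}^-)\otimes e^{\nu_k}$ with $\mathrm{Proj}(\nu_k)=\omega_j$. *)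

From mathcomp Require Import all_boot all_order all_algebra all_field.
Set Implicit Arguments. Unset Strict Implicit. Unset Printing Implicit Defensive.
Import Order.TTheory GRing.Theory Num.Theory.
Local Open Scope ring_scope.

(* simple roots alpha_1..alpha_6 are indices 0..5;
   Dynkin chain a1-a3-a4-a5-a6, a2 attached to a4 *)
Definition adjE6 (i j : 'I_6) : bool :=
  (nat_of_ord i, nat_of_ord j) \in
    [:: (0,2); (2,0); (2,3); (3,2); (3,4); (4,3); (4,5); (5,4); (1,3); (3,1)]%N.

Definition cartan : 'M[int]_6 :=
  \matrix_(i, j) (if i == j then 2 else if adjE6 i j then -1 else 0).

Definition cartanC : 'M[algC]_6 := map_mx (fun z : int => z%:~R) cartan.

(* elements of h = C (x) P are given by coordinates in the basis alpha_i *)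
Definition hvec := 'rV[algC]_6.
(* elements of P are given by integer coordinates in the basis lambda_i *)
Definition Pvec := 'rV[int]_6.
(* elements of Q are given by integer coordinates in the basis alpha_i *)
Definition Qvec := 'rV[int]_6.

Definition rvi (l : seq int) : 'rV[int]_6 := \row_(i < 6) nth 0 l i.

Definition lamP (j : 'I_6) : Pvec := delta_mx 0 j.
Definition lamh (j : 'I_6) : hvec := row j (invmx cartanC).
Definition QtoP (a : Qvec) : Pvec := a *m cartan.
Definition Qtoh (a : Qvec) : hvec := map_mx (fun z : int => z%:~R) a.

(* <h, beta> for h in h, beta in P (<alpha_i, lambda_j> = delta_ij) *)
Definition hpairP (c : hvec) (b : Pvec) : algC := \sum_(i < 6) c 0 i * (b 0 i)%:~R.
Definition hpairA (c : hvec) (j : 'I_6) : algC := (c *m cartanC) 0 j.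

(* the bimultiplicative epsilon on P *)
Definition epsL : seq (seq int) :=
  [:: [:: 1; 1; 1; 1; 1; 1];
      [:: -1; 1; 1; 1; 1; -1];
      [:: -1; 1; 1; 1; 1; 1];
      [:: 1; -1; 1; 1; 1; 1];
      [:: 1; 1; 1; 1; 1; -1];
      [:: 1; 1; 1; 1; 1; 1]].
Definition epsM : 'M[algC]_6 :=
  \matrix_(i, j) (nth 0 (nth [::] epsL i) j)%:~R.
Definition eps (a b : Pvec) : algC :=
  \prod_(i < 6) \prod_(j < 6) (epsM i j) ^ (a 0 i * b 0 j).

(* a monomial of S(h^-): a multiset (given as a list, order irrelevant) of
   modes (i,k) standing for alpha_i(-k), k >= 1 *)
Definition mon := seq ('I_6 * nat).
Definition key := (mon * Pvec)%type.
(* a vector is a finite formal linear combination of basis vectors u (x) e^beta *)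
Definition vec := seq (algC * key).

(* coefficient of the basis vector k (monomials compared as multisets) *)
Definition vcoef (v : vec) (k : key) : algC :=
  \sum_(p <- v | perm_eq p.2.1 k.1 && (p.2.2 == k.2)) p.1.
Definition vzero (v : vec) : Prop := forall k, vcoef v k = 0.
Definition veq (v w : vec) : Prop := forall k, vcoef v k = vcoef w k.
Definition vnonzero (v : vec) : Prop := exists k, vcoef v k != 0.

Definition lin (f : key -> vec) (v : vec) : vec :=
  flatten [seq [seq (p.1 * q.1, q.2) | q <- f p.2] | p <- v].
Definition scalev (a : algC) (v : vec) : vec := [seq (a * p.1, p.2) | p <- v].
Definition vadd (v w : vec) : vec := v ++ w.

Definition hneg (c : hvec) (k : nat) : vec -> vec :=
  lin (fun x => [seq (c 0 i, ((i, k) :: x.1, x.2)) | i <- enum 'I_6]).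

Fixpoint ann (c : hvec) (k : nat) (m : mon) : seq (algC * mon) :=
  match m with
  | [::] => [::]
  | x :: m' =>
      (if x.2 == k then [:: (k%:R * hpairA c x.1, m')] else [::])
      ++ [seq (q.1, x :: q.2) | q <- ann c k m']
  end.

Definition hpos (c : hvec) (k : nat) : vec -> vec :=
  lin (fun x => [seq (q.1, (q.2, x.2)) | q <- ann c k x.1]).

Definition h0 (c : hvec) : vec -> vec := lin (fun x => [:: (hpairP c x.2, x)]).

Definition hmode (c : hvec) (p : int) : vec -> vec :=
  match p with
  | Posz 0 => h0 c
  | Posz k.+1 => hpos c k.+1
  | Negz k => hneg c k.+1
  end.

Definition weight (m : mon) : nat := (\sum_(x <- m) x.2)%N.

Fixpoint compsF (f m : nat) : seq (seq nat) :=
  if m == 0%N then [:: [::]] else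
  match f with
  | 0 => [::]
  | f'.+1 => flatten [seq [seq k :: s | s <- compsF f' (m - k)] | k <- iota 1 m]
  end.
Definition comps (m : nat) := compsF m m.

(* coefficient of z^m in exp(sum_{k>=1} F_k z^k) for commuting operators F_k *)
Definition expco (F : nat -> vec -> vec) (m : nat) (v : vec) : vec :=
  flatten [seq scalev (((size s)`!)%:R^-1) (foldr F v s) | s <- comps m].

(* exp(sum_k h(-k)/k z^k), coefficient of z^a *)
Definition Em (c : hvec) (a : nat) : vec -> vec :=
  expco (fun k => scalev (k%:R^-1) \o hneg c k) a.
(* exp(-sum_k h(k)/k z^-k), coefficient of z^-b *)
Definition Ep (c : hvec) (b : nat) : vec -> vec :=
  expco (fun k => scalev (- k%:R^-1) \o hpos c k) b.

(* {1 (x) e^alpha}_n, alpha in Q (alpha-coordinates):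
   Y(1(x)e^alpha,z) = E^-(z) E^+(z) e_alpha z^{alpha(0)}.
   On u (x) e^beta the E^+ coefficients of z^-b vanish for b > weight u,
   so the sum over b is finite. *)
Definition vopE (a : Qvec) (n : int) : vec -> vec :=
  lin (fun x =>
    let al := QtoP a in
    let c := Qtoh a in
    let s : int := \sum_(i < 6) a 0 i * x.2 0 i in
    let base := [:: (eps al x.2, (x.1, x.2 + al))] in
    flatten [seq (let e := (b%:Z - s - n - 1) in
                  if 0 <= e then Em c (absz e) (Ep c b base) else [::])
            | b <- iota 0 (weight x.1).+1]).

Definition nord (c d : hvec) (p q : int) (v : vec) : vec :=
  if (0 <= p) && (q < 0) then hmode d q (hmode c p v)
  else hmode c p (hmode d q v).

(* {h(-1)h'(-1) (x) e^0}_n = sum_{p+q=n-1} :h(p)h'(q):  (on a basis vector only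
   the terms with |p| <= weight + |n| + 2 can be nonzero) *)
Definition vopHH (c d : hvec) (n : int) : vec -> vec :=
  lin (fun x =>
    let B := (weight x.1 + absz n + 2)%N in
    flatten [seq nord c d p (n - 1 - p) [:: (1, x)]
            | p <- [seq (i%:Z - B%:Z) | i <- iota 0 (B.*2.+1)]]).

Definition ha : hvec := lamh 5 - lamh 0.
Definition hb : hvec := lamh 2 - lamh 4.
Definition hc : hvec := lamh 0 - lamh 2 + lamh 4 - lamh 5.
Definition gam1 : Qvec := rvi [:: 1; 0; 0; 0; 0; -1].
Definition gam2 : Qvec := rvi [:: 0; 0; 1; 0; -1; 0].
Definition gam3 : Qvec := gam1 + gam2.

Definition vopEpm (g : Qvec) (n : int) (v : vec) : vec :=
  vadd (vopE g n v) (vopE (- g) n v).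

Definition omega_mode (n : int) (v : vec) : vec :=
  vadd (scalev (10%:R^-1)
          (vadd (vopHH ha ha n v) (vadd (vopHH hb hb n v) (vopHH hc hc n v))))
       (scalev (5%:R^-1)
          (vadd (scalev (-1) (vopEpm gam1 n v))
             (vadd (scalev (-1) (vopEpm gam2 n v)) (vopEpm gam3 n v)))).

Definition Lop (n : int) : vec -> vec := omega_mode (n + 1).

Definition aS (i : 'I_6) : Qvec := delta_mx 0 i.
Definition theta : Qvec := rvi [:: 1; 2; 2; 3; 2; 1].
Definition raise1 : vec -> vec := vopE (aS (inord 1)) 0.
Definition raise2 : vec -> vec := vopE (aS (inord 3)) 0.
Definition raise3 (v : vec) : vec := vadd (vopE (aS (inord 2)) 0 v) (vopE (aS (inord 4)) 0 v).
Definition raise4 (v : vec) : vec := vadd (vopE (aS (inord 0)) 0 v) (vopE (aS (inord 5)) 0 v).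
Definition raise0 : vec -> vec := vopE (- theta) 1.

Definition tauI (i : 'I_6) : 'I_6 := inord (nth 0%N [:: 5; 1; 4; 3; 2; 0]%N i).
Definition tauP (nu : Pvec) : Pvec := \row_(i < 6) nu 0 (tauI i).
(* Proj, in lambda-coordinates *)
Definition Proj (nu : Pvec) : 'rV[algC]_6 :=
  2%:R^-1 *: (map_mx (fun z : int => z%:~R) nu + map_mx (fun z : int => z%:~R) (tauP nu)).
Definition omega4 : 'rV[algC]_6 :=
  2%:R^-1 *: (delta_mx 0 (0 : 'I_6) + delta_mx 0 (inord 5 : 'I_6)).

Definition inVL1 (v : vec) : Prop :=
  forall k, vcoef v k != 0 -> exists a : Qvec, k.2 = lamP 0 + QtoP a.

Definition hw_vector (v : vec) (h : algC) (om : 'rV[algC]_6) : Prop :=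
  vnonzero v /\
  [/\ vzero (raise0 v),
      (vzero (raise1 v) /\ vzero (raise2 v) /\ vzero (raise3 v) /\ vzero (raise4 v)),
      (vzero (Lop 1 v) /\ vzero (Lop 2 v)),
      veq (Lop 0 v) (scalev h v)
    & forall k, vcoef v k != 0 -> Proj k.2 = om].

Definition v_lam1 : vec := [:: (1, ([::], lamP 0))].

(* The vector e^{lambda_1} carries no oscillator modes, so every mode of a
   vertex operator Y(1 (x) e^alpha, z) of degree above the pairing
   <alpha, lambda_1> kills it, and only the zero modes h(0) h'(0) of the
   quadratic part of omega survive in L(0).  Pairing lambda_1 with the roots
   in play is 0 or +-1, which gives (HW1)-(HW3); (HW4) is the value
   (1/10)(|a|^2 + |b|^2 + |c|^2) with a, b, c the three Heisenberg vectors in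
   omega, read off from the first column of the inverse Cartan matrix; and
   (HW5) is tau lambda_1 = lambda_6. *)
From mathcomp Require Import all_boot all_order all_algebra all_field.
From mathcomp Require Import zify ring.
Import Order.TTheory GRing.Theory Num.Theory.
Local Open Scope ring_scope.

Definition vexp (b : Pvec) : vec := [:: (1, ([::], b))].

Definition qpair (a : Qvec) (b : Pvec) : int := \sum_(i < 6) a 0 i * b 0 i.

Lemma vzero_nil : vzero [::].
Proof. by move=> k; rewrite /vcoef big_nil. Qed.

Lemma lin_vexp f b : lin f (vexp b) = [seq (1 * q.1, q.2) | q <- f ([::], b)].
Proof. by rewrite /lin /= cats0. Qed.

Lemma vcoef_scalev a v k : vcoef (scalev a v) k = a * vcoef v k.
Proof. by rewrite /vcoef /scalev big_map mulr_sumr. Qed.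

Lemma vcoef_vexp b k :
  vcoef (vexp b) k = if perm_eq [::] k.1 && (b == k.2) then 1 else 0.
Proof. by rewrite /vcoef big_cons big_nil; case: ifP; rewrite ?addr0. Qed.

Lemma vcoef_vexp_neq0 b k : vcoef (vexp b) k != 0 -> k.2 = b.
Proof. by rewrite vcoef_vexp; case: ifP => [/andP[_ /eqP]|]; rewrite ?eqxx. Qed.

Lemma vexp_neq0 b : vnonzero (vexp b).
Proof. by exists ([::], b); rewrite vcoef_vexp perm_refl eqxx oner_eq0. Qed.

Lemma qpairNl a b : qpair (- a) b = - qpair a b.
Proof. by rewrite /qpair -sumrN; apply: eq_bigr => i _; rewrite mxE mulNr. Qed.

Lemma qpair_lamP a j : qpair a (lamP j) = a 0 j.
Proof.
rewrite /qpair (bigD1 j) //= big1 => [|i /negbTE ji]; rewrite !mxE ?ji ?mulr0 //.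
by rewrite !eqxx mulr1 addr0.
Qed.

Lemma hpairP_lamP c j : hpairP c (lamP j) = c 0 j.
Proof.
rewrite /hpairP (bigD1 j) //= big1 => [|i /negbTE ji]; rewrite !mxE ?ji ?mulr0 //.
by rewrite !eqxx mulr1 addr0.
Qed.

(* On [vexp b] the oscillator sum in [vopE] has the single index 0, whose
   z-exponent [- qpair a b - n - 1] would have to be nonnegative. *)
Lemma vopE_vexp a n b : 0 < n + 1 + qpair a b -> vopE a n (vexp b) = [::].
Proof.
move=> pos; rewrite /vopE lin_vexp /weight big_nil /= -/(qpair a b).
by case: ifP => //; lia.
Qed.

Lemma vopEpm_vexp g n b : - n <= qpair g b <= n -> vopEpm g n (vexp b) = [::].
Proof. by rewrite /vopEpm => /andP[lo hi]; rewrite !vopE_vexp ?qpairNl //; lia. Qed.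

Lemma nord_vexp c d p q b : 0 <= p + q ->
  nord c d p q (vexp b) =
  if (p == 0) && (q == 0) then [:: (1 * hpairP d b * hpairP c b, ([::], b))]
  else [::].
Proof. by case: p => [[|k]|k]; case: q => [[|l]|l] //= pq; rewrite /nord /=; lia. Qed.

Lemma vopHH_vexp c d n b : 1 < n -> vopHH c d n (vexp b) = [::].
Proof.
move=> n_gt1; rewrite /vopHH lin_vexp.
suff -> s : flatten [seq nord c d p (n - 1 - p) (vexp b) | p <- s] = [::] by [].
elim: s => //= p s ->; rewrite cats0 nord_vexp; last by lia.
by case: ifP => // /andP[/eqP p0 /eqP q0]; lia.
Qed.

Lemma vopHH1_vexp c d b :
  vopHH c d 1 (vexp b) = [:: (1 * (1 * hpairP d b * hpairP c b), ([::], b))].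
Proof. by rewrite /vopHH lin_vexp /weight big_nil. Qed.

Section OmegaOnExp.

Variable b : Pvec.
Hypotheses (gam1_b : -1 <= qpair gam1 b <= 1) (gam2_b : -1 <= qpair gam2 b <= 1)
  (gam3_b : -1 <= qpair gam3 b <= 1).

Lemma omega_mode_vexp n : 1 < n -> omega_mode n (vexp b) = [::].
Proof.
move: gam1_b gam2_b gam3_b => /andP[? ?] /andP[? ?] /andP[? ?] n_gt1.
by rewrite /omega_mode !vopHH_vexp // !vopEpm_vexp //; lia.
Qed.

Lemma vcoef_omega_mode1_vexp k :
  vcoef (omega_mode 1 (vexp b)) k =
  10%:R^-1 * (hpairP ha b ^+ 2 + hpairP hb b ^+ 2 + hpairP hc b ^+ 2)
    * vcoef (vexp b) k.
Proof.
rewrite /omega_mode !vopHH1_vexp !vopEpm_vexp // vcoef_vexp.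
rewrite /vcoef /scalev /= !big_cons big_nil /=.
by case: (_ && _) => /=; ring.
Qed.

End OmegaOnExp.

(* [cartan_inv3 = 3 cartan^-1], the adjugate of the Cartan matrix of E6,
   whose determinant is 3. *)
Definition cartan_inv3 : 'M[int]_6 := \matrix_(i, j) nth 0 (nth [::]
  [:: [:: 4; 3; 5; 6; 4; 2]; [:: 3; 6; 6; 9; 6; 3]; [:: 5; 6; 10; 12; 8; 4];
      [:: 6; 9; 12; 18; 12; 6]; [:: 4; 6; 8; 12; 10; 5]; [:: 2; 3; 4; 6; 5; 4]]
  i) j.

Lemma cartan_mul_inv3 : cartan *m cartan_inv3 = 3%:M.
Proof.
apply/matrixP=> i j; rewrite !mxE !big_ord_recr big_ord0 /= !mxE.
by case: i => [[|[|[|[|[|[|?]]]]]] ?] //; case: j => [[|[|[|[|[|[|?]]]]]] ?];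
  vm_compute.
Qed.

Lemma invmx_cartanC :
  invmx cartanC = 3%:R^-1 *: map_mx (fun z : int => z%:~R) cartan_inv3.
Proof.
set M := RHS; have CM : cartanC *m M = 1%:M.
  rewrite /M -scalemxAr /cartanC -map_mxM cartan_mul_inv3.
  apply/matrixP=> i j; rewrite !mxE; case: (i == j); rewrite ?mulr0 //.
  by rewrite mulrC mulfV // pnatr_eq0.
have [C_unit _] := mulmx1_unit CM.
by rewrite -[RHS](mulKmx C_unit) CM mulmx1.
Qed.

Lemma conformal_weight_lam1 :
  10%:R^-1 * (hpairP ha (lamP 0) ^+ 2 + hpairP hb (lamP 0) ^+ 2
              + hpairP hc (lamP 0) ^+ 2) = 15%:R^-1 :> algC.
Proof. by rewrite !hpairP_lamP /ha /hb /hc !mxE invmx_cartanC !mxE /=; field. Qed.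

Lemma gam_lam1 : [/\ -1 <= qpair gam1 (lamP 0) <= 1,
  -1 <= qpair gam2 (lamP 0) <= 1 & -1 <= qpair gam3 (lamP 0) <= 1].
Proof. by rewrite !qpair_lamP /gam3 !mxE. Qed.

Lemma Proj_lam1 : Proj (lamP 0) = omega4.
Proof.
apply/matrixP=> i j; rewrite !mxE ord1.
by case: j => [[|[|[|[|[|[|?]]]]]] ?] //; rewrite /tauI /= -!val_eqE /= ?inordK.
Qed.

Theorem lemma6p14 :
  inVL1 v_lam1 /\ hw_vector v_lam1 (15%:R^-1) omega4.
Proof.
have [g1 g2 g3] := gam_lam1.
have raiseE (k : 'I_6) : vopE (aS k) 0 v_lam1 = [::].
  by rewrite vopE_vexp // qpair_lamP add0r mxE ltr_pwDl ?ler0n.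
split; first by move=> k /vcoef_vexp_neq0 ->; exists 0; rewrite /QtoP mul0mx addr0.
split; first exact: vexp_neq0.
split.
- by rewrite /raise0 vopE_vexp ?qpair_lamP ?mxE; first exact: vzero_nil.
- by rewrite /raise1 /raise2 /raise3 /raise4 /vadd !raiseE; do !split; exact: vzero_nil.
- by rewrite /Lop !omega_mode_vexp //; split; exact: vzero_nil.
- by move=> k; rewrite /Lop add0r vcoef_omega_mode1_vexp // conformal_weight_lam1
    vcoef_scalev.
- by move=> k /vcoef_vexp_neq0 ->; exact: Proj_lam1.
Qed.
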